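(* Let $X$ be a Banach space with $n(X)=1$. If $X$ has the $\mathbf{L}_{p,p}$-nu, then the norm of $X$ is strongly subdifferentiable (at every point).
   Context: Let $X$ be a Banach space over $\mathbb{K}\in\{\mathbb{R},\mathbb{C}\}$, $\mathcal{L}(X)$ the bounded linear operators on $X$. $\Pi(X)=\{(x,x^* )\in S_X\times S_{X^*}: x^*(x)=1\}$; $v(T)=\sup\{|x^*(Tx)|:(x,x^* )\in\Pi(X)\}$; $n(X)=\inf\{v(T): T\in\mathcal{L}(X),\ \|T\|=1\}$. $X$ has the $\mathbf{L}_{p,p}$-nu if for every $\varepsilon>0$ and $(x,x^* )\in\Pi(X)$ there is $\eta(\varepsilon,(x,x^* ))>0$ such that whenever $T\in\mathcal{L}(X)$ with $v(T)=1$ satisfies $|x^*(Tx)|>1-\eta(\varepsilon,(x,x^* ))$, there is $S\in\mathcal{L}(X)$ with $v(S)=1$, $|x^*(Sx)|=1$ and $\|S-T\|<\varepsilon$. The norm of $X$ is strongly subdifferentiable (SSD) at $x\in X$ if the limit $\lim_{t\to0^+}\frac{\|x+th\|-\|x\|}{t}$ exists uniformly in $h\in B_X$; the norm is SSD if it is SSD at every point. *)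

From HB Require Import structures.
From mathcomp Require Import all_boot all_order all_algebra.
From mathcomp Require Import complex.
From mathcomp Require Import all_classical all_reals all_analysis.
Set Implicit Arguments. Unset Strict Implicit. Unset Printing Implicit Defensive.
Import Order.TTheory GRing.Theory Num.Theory.
Import numFieldNormedType.Exports.
Local Open Scope ring_scope.

Definition scalarK (R : realType) (b : bool) : numFieldType :=
  if b then (R[i] : numFieldType) else (R : numFieldType).

Section Defs.
Context {K : numFieldType}.

Definition is_sup (A : K -> Prop) (c : K) : Prop :=
  (forall a, A a -> a <= c) /\ (forall e, 0 < e -> exists a, A a /\ c - e < a).
Definition is_inf (A : K -> Prop) (c : K) : Prop :=
  (forall a, A a -> c <= a) /\ (forall e, 0 < e -> exists a, A a /\ a < c + e).

Context {X : normedModType K}.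

Definition bounded_op (T : {linear X -> X}) : Prop :=
  exists M : K, forall x, `|T x| <= M * `|x|.
Definition bounded_fun (f : {linear X -> K^o}) : Prop :=
  exists M : K, forall x, `|f x| <= M * `|x|.

Definition is_opnorm {Y : normedModType K} (F : X -> Y) (c : K) : Prop :=
  is_sup (fun a => exists x, `|x| <= 1 /\ a = `|F x|) c.

Definition in_Pi (x : X) (f : {linear X -> K^o}) : Prop :=
  `|x| = 1 /\ bounded_fun f /\ is_opnorm f 1 /\ f x = 1.

Definition is_numrad (T : {linear X -> X}) (c : K) : Prop :=
  is_sup (fun a => exists x f, in_Pi x f /\ a = `|f (T x)|) c.

Definition is_numindex (c : K) : Prop :=
  is_inf (fun a => exists T : {linear X -> X},
             bounded_op T /\ is_opnorm T 1 /\ is_numrad T a) c.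

Definition Lpp_nu : Prop :=
  forall e : K, 0 < e -> forall (x : X) (f : {linear X -> K^o}), in_Pi x f ->
  exists eta : K, 0 < eta /\
  forall T : {linear X -> X}, bounded_op T -> is_numrad T 1 ->
    1 - eta < `|f (T x)| ->
    exists S : {linear X -> X}, bounded_op S /\ is_numrad S 1 /\
      `|f (S x)| = 1 /\
      exists c, is_opnorm (fun y => S y - T y) c /\ c < e.

Definition SSD_at (x : X) : Prop :=
  exists D : X -> K, forall e : K, 0 < e -> exists d : K, 0 < d /\
    forall t : K, 0 < t -> t < d -> forall h : X, `|h| <= 1 ->
      `|(`|x + t *: h| - `|x|) / t - D h| < e.

Definition norm_SSD : Prop := forall x : X, SSD_at x.
End Defs.

(* Fix (x, F) in Pi(X).  For h in B_X the difference quotients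
   slope x h s = (||x + s h|| - ||x||) / s are bounded below by -||h|| and
   their infimum over s > 0 is the candidate one-sided derivative.  The heart
   of the proof is that they are almost monotone, uniformly in h:
   slope x h tau - eps <= slope x h s for all s > 0 once tau is small.
   To see this, take a functional phi norming y = x + tau h (Hahn-Banach).
   The rank-one operator T = phi (.) x has norm one, hence numerical radius one
   because n(X) = 1, and |F(T x)| = |phi x| is close to 1.  The L_{p,p}-nu
   gives S close to T with |F(S x)| = 1; since n(X) = 1, S is a contraction,
   so a rotation G of F o S is a norm-one functional with G x = 1 that is close
   to phi.  Then slope x h tau <= Re phi h ~ Re G h <= slope x h s.
   Homogeneity reduces arbitrary points to unit vectors. *)

From HB Require Import structures.
From mathcomp Require Import all_boot all_order all_algebra.
From mathcomp Require Import complex.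
From mathcomp Require Import all_classical all_reals all_analysis.
From mathcomp Require Import ring lra.
Import Order.TTheory GRing.Theory Num.Theory.
Import numFieldNormedType.Exports.
Local Open Scope ring_scope.

Section ScalarField.
Context {R : realType}.

Definition emb (b : bool) : R -> scalarK R b :=
  if b as b' return R -> scalarK R b' then fun r : R => (r%:C)%C : R[i]
  else fun r : R => r.
Definition ReK (b : bool) : scalarK R b -> R :=
  if b as b' return scalarK R b' -> R then fun z : R[i] => complex.Re z
  else fun r : R => r.

Context {b : bool}.
Local Notation K := (scalarK R b).
Local Notation e := (@emb b).
Local Notation Re := (@ReK b).
Implicit Types (k x y : K) (r s : R).

Lemma embD r s : e (r + s) = e r + e s.
Proof. by case: b => //=; rewrite rmorphD. Qed.
Lemma embN r : e (- r) = - e r.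
Proof. by case: b => //=; rewrite rmorphN. Qed.
Lemma embB r s : e (r - s) = e r - e s.
Proof. by rewrite embD embN. Qed.
Lemma embM r s : e (r * s) = e r * e s.
Proof. by case: b => //=; rewrite rmorphM. Qed.
Lemma emb0 : e 0 = 0. Proof. by case: b => //=; rewrite rmorph0. Qed.
Lemma emb1 : e 1 = 1. Proof. by case: b => //=; rewrite rmorph1. Qed.
Lemma embV r : e r^-1 = (e r)^-1.
Proof. by case: b => //=; rewrite fmorphV. Qed.
Lemma emb_le r s : (e r <= e s) = (r <= s).
Proof. by case: b => //=; rewrite lecR. Qed.
Lemma emb_lt r s : (e r < e s) = (r < s).
Proof. by case: b => //=; rewrite ltcR. Qed.
Lemma norm_emb r : `|e r| = e `|r|.
Proof. by case: b => //=; rewrite normc_def /= expr0n /= addr0 sqrtr_sqr. Qed.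

Lemma ReK_emb r : Re (e r) = r. Proof. by case: b. Qed.
Lemma ReK1 : Re 1 = 1. Proof. by rewrite -emb1 ReK_emb. Qed.
Lemma ReKD x y : Re (x + y) = Re x + Re y.
Proof. by case: b x y => // -[? ?] [? ?]. Qed.
Lemma ReKN x : Re (- x) = - Re x. Proof. by case: b x => // -[? ?]. Qed.
Lemma ReKB x y : Re (x - y) = Re x - Re y. Proof. by rewrite ReKD ReKN. Qed.
Lemma ReK_embM r k : Re (e r * k) = r * Re k.
Proof. by case: b k => //= -[a c] /=; rewrite mul0r subr0. Qed.
Lemma ReK_le {x y} : x <= y -> Re x <= Re y.
Proof. by case: b x y => //= x y; rewrite lecE => /andP[]. Qed.
Lemma ReK_le_norm k : Re k <= Re `|k|.
Proof.
case: b k => /= k; last exact: ler_norm.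
by have := normc_ge_Re k; rewrite lecR => /(le_trans (ler_norm _)).
Qed.

Lemma ge0_embRe {k} : 0 <= k -> e (Re k) = k.
Proof.
move=> k0; have kr : k \is Num.real by rewrite realE k0.
by case: b k k0 kr => //= k _ /RRe_real.
Qed.
Lemma lt0_emb {k} : 0 < k -> exists2 r, 0 < r & k = e r.
Proof.
move=> k0; exists (Re k); last by rewrite ge0_embRe // ltW.
by rewrite -(emb_lt 0) emb0 ge0_embRe // ltW.
Qed.
End ScalarField.

Section SupremaAndOperatorNorms.
Context {K : numFieldType}.
Implicit Types (A B : K -> Prop) (a c k : K).

Lemma is_sup_ge0 {A c} : is_sup A c -> (forall a, A a -> 0 <= a) -> 0 <= c.
Proof.
move=> [ub adh] A0; have [a [Aa _]] := adh 1 ltr01.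
exact: le_trans (A0 _ Aa) (ub _ Aa).
Qed.

Lemma is_sup_le {A c M} : is_sup A c -> (forall a, A a -> 0 <= a) ->
  M \is Num.real -> (forall a, A a -> a <= M) -> c <= M.
Proof.
move=> Hs A0 Mr AM; have cr : c \is Num.real by rewrite ger0_real // (is_sup_ge0 Hs A0).
rewrite real_leNgt //; apply/negP => Mc.
have [a [Aa]] : exists a, A a /\ c - (c - M) < a by apply: Hs.2; rewrite subr_gt0.
rewrite opprB addrCA subrr addr0 => /lt_le_trans /(_ (AM _ Aa)).
by rewrite ltxx.
Qed.

Lemma is_sup_scale {A B k c} : 0 < k -> is_sup A c ->
  (forall a, B a -> exists a0, A a0 /\ a = k * a0) ->
  (forall a0, A a0 -> B (k * a0)) -> is_sup B (k * c).
Proof.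
move=> k0 [ub adh] BA AB; split.
  by move=> a /BA [a0 [Aa0 ->]]; rewrite ler_pM2l // ub.
move=> ep ep0; have [a0 [Aa0 ha0]] := adh (ep / k) (divr_gt0 ep0 k0).
exists (k * a0); split; first exact: AB.
by move: ha0; rewrite -(ltr_pM2l k0) mulrBr mulrCA divff ?gt_eqF // mulr1.
Qed.

Context {X : normedModType K}.
Implicit Types (x y z h : X).

Definition nonexpansive {Y : normedModType K} (F : X -> Y) : Prop :=
  forall z, `|F z| <= `|z|.

Lemma opnorm_le {Y : normedModType K} {F : X -> Y} {c} :
  scalable F -> is_opnorm F c -> forall z, `|F z| <= c * `|z|.
Proof.
move=> FZ [ub _] z; have [->|z0] := eqVneq z 0.
  have F0 : F 0 = 0 by rewrite -(scale0r (0 : X)) FZ scale0r.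
  by rewrite F0 !normr0 mulr0.
have nz : 0 < `|z| by rewrite normr_gt0.
have /ub : exists w, `|w| <= 1 /\ `|F (`|z|^-1 *: z)| = `|F w|.
  exists (`|z|^-1 *: z); split => //.
  by rewrite normrZ ger0_norm ?invr_ge0 // mulVf ?gt_eqF.
by rewrite FZ normrZ ger0_norm ?invr_ge0 // ler_pdivrMl // mulrC.
Qed.

Lemma opnorm1_nonexpansive {Y : normedModType K} {F : X -> Y} :
  scalable F -> is_opnorm F 1 -> nonexpansive F.
Proof. by move=> FZ F1 z; rewrite -[leRHS]mul1r; exact: opnorm_le. Qed.

Lemma Pi_nonexpansive {x} {f : {linear X -> K^o}} : in_Pi x f -> nonexpansive f.
Proof. by move=> [_ [_ [f1 _]]]; apply: opnorm1_nonexpansive f1 => k z; rewrite linearZ. Qed.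

Lemma unit_ball_bound {S : X -> X} {M} :
  (forall z, `|S z| <= M * `|z|) -> forall z, `|z| <= 1 -> `|S z| <= `|M|.
Proof.
move=> HM z z1; have [->|z0] := eqVneq z 0.
  by apply: le_trans (HM 0) _; rewrite normr0 mulr0.
have nz : 0 < `|z| by rewrite normr_gt0.
have M0 : 0 <= M by rewrite -(pmulr_lge0 _ nz) (le_trans _ (HM z)).
by apply: (le_trans (HM z)); rewrite ger0_norm // -[leRHS]mulr1 ler_wpM2l.
Qed.

Definition mklinf {f : X -> K^o} (H : linear f) : {linear X -> K^o} :=
  HB.pack f (GRing.isLinear.Build K X K^o *:%R f H).
Definition mklinop {f : X -> X} (H : linear f) : {linear X -> X} :=
  HB.pack f (GRing.isLinear.Build K X X *:%R f H).

Lemma rank1_linear (g : {linear X -> K^o}) x : linear (fun z => g z *: x).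
Proof. by move=> a z w; rewrite linearP /= scalerDl scalerA. Qed.
Definition rank1 g x : {linear X -> X} := mklinop (rank1_linear g x).

Lemma scaleop_linear m (S : {linear X -> X}) : linear (fun z => m *: S z).
Proof. by move=> a z w; rewrite linearP scalerDr !scalerA mulrC. Qed.
Definition scaleop m S : {linear X -> X} := mklinop (scaleop_linear m S).
End SupremaAndOperatorNorms.

Section NumericalIndexOne.
Context {R : realType} {b : bool}.
Local Notation K := (scalarK R b).
Local Notation e := (@emb R b).
Local Notation Re := (@ReK R b).

(* Completeness of R: a nonempty, bounded set of nonnegative scalars has a
   supremum in K. *)
Lemma is_sup_exists (A : K -> Prop) : (exists a, A a) -> (forall a, A a -> 0 <= a) ->
  (exists M, forall a, A a -> a <= M) -> exists c, is_sup A c.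
Proof.
move=> [a0 Aa0] A0 [M AM].
pose A' : set R := fun r => A (e r).
have AE a : A a -> A' (Re a) by move=> Aa; rewrite /A' ge0_embRe //; exact: A0.
have hs : has_sup A'.
  split; first by exists (Re a0); exact: AE.
  by exists (Re M) => r /AM /ReK_le; rewrite ReK_emb.
exists (e (sup A')); split.
  move=> a Aa; rewrite -(ge0_embRe (A0 _ Aa)) emb_le.
  exact: sup_upper_bound hs _ (AE _ Aa).
move=> ep /lt0_emb [r r0 ->].
have [r' Ar' hr'] := sup_adherent r0 hs.
by exists (e r'); split => //; rewrite -embB emb_lt.
Qed.

Context {X : normedModType K}.
Implicit Types (x y z h : X).
Hypothesis numindex1 : @is_numindex _ X 1.

(* n(X) = 1 is witnessed by some operator, so Pi(X) is nonempty. *)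
Lemma Pi_nonempty : exists x (f : {linear X -> K^o}), in_Pi x f.
Proof.
have [a [[T [_ [_ Tr]]] _]] := numindex1.2 1 ltr01.
have [_ [[x [f [Pf _]]] _]] := Tr.2 1 ltr01.
by exists x, f.
Qed.

Lemma numrad_exists {T : {linear X -> X}} :
  nonexpansive T -> exists2 a, is_numrad T a & a <= 1.
Proof.
move=> HT; pose A a := exists x (f : {linear X -> K^o}), in_Pi x f /\ a = `|f (T x)|.
have A0 a : A a -> 0 <= a by move=> [x [f [_ ->]]].
have A1 a : A a -> a <= 1.
  move=> [x [f [Pf ->]]]; apply: le_trans (Pi_nonexpansive Pf _) _.
  by rewrite -Pf.1; exact: HT.
have [a Ha] : exists a, is_sup A a.
  apply: is_sup_exists A0 _; last by exists 1.
  by have [x [f Pf]] := Pi_nonempty; exists `|f (T x)|, x, f.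
by exists a => //; apply: (is_sup_le Ha A0 _ A1); rewrite real1.
Qed.

Lemma numrad_one {T : {linear X -> X}} : bounded_op T -> is_opnorm T 1 -> is_numrad T 1.
Proof.
move=> TB T1; have Tc : nonexpansive T.
  by apply: opnorm1_nonexpansive T1 => k z; rewrite linearZ.
have [a Ha a1] := numrad_exists Tc; suff -> : 1 = a by [].
by apply/le_anti; rewrite a1 andbT; apply: numindex1.1; exists T.
Qed.

Lemma opnorm_exists {S : {linear X -> X}} : bounded_op S -> exists m, is_opnorm S m.
Proof.
move=> [M HM]; apply: is_sup_exists.
- by exists `|S 0|, 0; rewrite normr0 ler01.
- by move=> a [z [_ ->]].
- by exists `|M| => a [z [z1 ->]]; exact: unit_ball_bound HM z z1.
Qed.

(* Since n(X) = 1, ||S|| <= v(S): an operator with v(S) = 1 is a contraction.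
   Otherwise S / ||S|| would have norm one and numerical radius < 1. *)
Lemma numrad1_nonexpansive {S : {linear X -> X}} :
  bounded_op S -> is_numrad S 1 -> nonexpansive S.
Proof.
move=> SB S1; have SZ : scalable S by move=> k z; rewrite linearZ.
have [m Hm] := opnorm_exists SB.
have Sm := opnorm_le SZ Hm.
have [m0|mn0] := eqVneq m 0.
  by move=> z; apply: le_trans (Sm z) _; rewrite m0 mul0r.
have mp : 0 < m by rewrite lt_def mn0 (is_sup_ge0 Hm) // => a [z [_ ->]].
have mi : 0 < m^-1 by rewrite invr_gt0.
pose S' := scaleop m^-1 S.
have S'E z : S' z = m^-1 *: S z by [].
have S'1 : is_opnorm S' 1.
  rewrite -(mulVf mn0); apply: (is_sup_scale mi Hm).
    move=> a [z [z1 ->]]; exists `|S z|; split; first by exists z.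
    by rewrite S'E normrZ gtr0_norm.
  by move=> a0 [z [z1 ->]]; exists z; split => //; rewrite S'E normrZ gtr0_norm.
have S'r : is_numrad S' (m^-1 * 1).
  apply: (is_sup_scale mi S1).
    move=> a [x [f [Pf ->]]]; exists `|f (S x)|; split; first by exists x, f.
    by rewrite S'E linearZ /= normrM gtr0_norm.
  move=> a0 [x [f [Pf ->]]]; exists x, f; split => //.
  by rewrite S'E linearZ /= normrM gtr0_norm.
have S'B : bounded_op S'.
  case: SB => M HM; exists (m^-1 * M) => z; rewrite S'E normrZ gtr0_norm // -mulrA.
  by rewrite ler_pM2l.
have := numindex1.1 _ (ex_intro _ S' (conj S'B (conj S'1 S'r))).
rewrite mulr1 invf_ge1 // => m1 z.
by apply: le_trans (Sm z) _; rewrite -[leRHS]mul1r ler_wpM2r.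
Qed.
End NumericalIndexOne.

Section HahnBanach.
Local Open Scope classical_set_scope.

Lemma inf_addB {R : realType} (A B : set R) (c : R) : A !=set0 -> B !=set0 ->
  (forall a b, A a -> B b -> c <= a + b) -> (c <= inf A + inf B)%R.
Proof.
move=> An Bn H; rewrite -lerBlDl; apply: lb_le_inf => // bb Bb.
rewrite lerBlDl -lerBlDr; apply: lb_le_inf => // a Aa.
by rewrite lerBlDr; exact: H.
Qed.

Lemma inf_scale_ge {R : realType} (A : set R) (c s : R) : (0 < s)%R -> A !=set0 ->
  (forall a, A a -> c <= s * a) -> (c <= s * inf A)%R.
Proof.
move=> s0 An H; rewrite -ler_pdivrMl //; apply: lb_le_inf => // a Aa.
by rewrite ler_pdivrMl //; exact: H.
Qed.

Context {R : realType} {b : bool}.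
Local Notation K := (scalarK R b).
Local Notation e := (@emb R b).
Local Notation Re := (@ReK R b).
Context {X : normedModType K}.
Implicit Types (x y z w h : X) (q : X -> R).

Definition rnorm z : R := Re `|z|.

Lemma normE z : `|z| = e (rnorm z).
Proof. by rewrite /rnorm ge0_embRe. Qed.

Lemma rnormZ r z : rnorm (e r *: z) = (`|r| * rnorm z)%R.
Proof. by rewrite /rnorm normrZ norm_emb ReK_embM. Qed.

Lemma rnormD z w : (rnorm (z + w) <= rnorm z + rnorm w)%R.
Proof. by rewrite /rnorm -ReKD; apply: ReK_le; exact: ler_normD. Qed.

Definition sublinear q := (forall z w, q (z + w) <= q z + q w)%R /\
  (forall r z, (0 < r)%R -> q (e r *: z) = r * q z).

Lemma hom_of_le q : (forall r z, (0 < r)%R -> q (e r *: z) <= r * q z)%R ->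
  forall r z, (0 < r)%R -> q (e r *: z) = r * q z.
Proof.
move=> H r z r0; apply/le_anti; rewrite H //=.
have ri : (0 < r^-1)%R by rewrite invr_gt0.
have := H _ (e r *: z) ri; rewrite scalerA -embM mulVf ?gt_eqF // emb1 scale1r.
by rewrite ler_pdivlMl.
Qed.

Lemma rnorm_sublinear : sublinear rnorm.
Proof. by split=> [|r z r0]; [exact: rnormD|rewrite rnormZ gtr0_norm]. Qed.

Section Sublinear.
Context {q : X -> R}.
Hypothesis q_sub : sublinear q.

Lemma sublinear0 : q 0 = 0.
Proof. by have := q_sub.2 2%R 0 (ltr0Sn R 1); rewrite scaler0; lra. Qed.

Lemma sublinearZ {t z} : (0 <= t)%R -> q (e t *: z) = (t * q z)%R.
Proof.
rewrite le_eqVlt => /orP[/eqP <-|t0]; last exact: q_sub.2.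
by rewrite emb0 scale0r mul0r sublinear0.
Qed.

Lemma sublinear_oppge0 z : (0 <= q z + q (- z))%R.
Proof. by rewrite -sublinear0 -(subrr z); exact: q_sub.1. Qed.

Definition lower_set z w : set R :=
  fun a => exists2 t, (0 <= t)%R & a = (q (w + e t *: z) - t * q z)%R.
Definition lower z w : R := inf (lower_set z w).

Variable z : X.

Lemma lower_set_ne w : lower_set z w !=set0.
Proof. by exists (q (w + e 0 *: z) - 0 * q z)%R, 0%R. Qed.

Lemma lower_set_lb w : lbound (lower_set z w) (- q (- w))%R.
Proof.
move=> _ [t t0 ->]; have := q_sub.1 (w + e t *: z) (- w).
by rewrite addrC addKr (sublinearZ t0); lra.
Qed.

Lemma lower_set_bounded w : has_lbound (lower_set z w).
Proof. by exists (- q (- w))%R; exact: lower_set_lb. Qed.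

Lemma lower_le w : (lower z w <= q w)%R.
Proof.
apply: ge_inf; first exact: lower_set_bounded.
by exists 0%R; rewrite // emb0 scale0r addr0 mul0r subr0.
Qed.

Lemma lower_opp : (lower z (- z) <= - q z)%R.
Proof.
apply: ge_inf; first exact: lower_set_bounded.
by exists 1%R; rewrite // emb1 scale1r addNr sublinear0 mul1r sub0r.
Qed.

Lemma lower_sublinear : sublinear (lower z).
Proof.
split=> [w1 w2|].
  apply: inf_addB; [exact: lower_set_ne|exact: lower_set_ne|].
  move=> _ _ [t1 t10 ->] [t2 t20 ->].
  apply: le_trans (ge_inf (lower_set_bounded _) _) _.
    by exists (t1 + t2)%R; [exact: addr_ge0|].
  have := q_sub.1 (w1 + e t1 *: z) (w2 + e t2 *: z).
  by rewrite addrACA -scalerDl -embD mulrDl; lra.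
apply: hom_of_le => s w s0; apply: inf_scale_ge => //; first exact: lower_set_ne.
move=> _ [t t0 ->]; apply: ge_inf; first exact: lower_set_bounded.
exists (s * t)%R; first by rewrite mulr_ge0 // ltW.
by rewrite mulrBr -(q_sub.2 _ _ s0) scalerDr scalerA -embM mulrA.
Qed.
End Sublinear.

(* The sublinear functional below the norm that is <= -||x|| at -x. *)
Definition norm_at x := @lower rnorm x.

Record minorant x := Minorant {
  minorant_fun :> X -> R;
  minorant_sub : sublinear minorant_fun;
  minorant_le : forall w, (minorant_fun w <= norm_at x w)%R }.
Arguments Minorant {x minorant_fun}.
Arguments minorant_sub {x}.
Arguments minorant_le {x}.

Lemma minorant_lb {x} (m : minorant x) w : (- norm_at x (- w) <= m w)%R.
Proof.
have := sublinear_oppge0 (minorant_sub m) w; rewrite -lerBlDr sub0r.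
by apply: le_trans; rewrite lerN2 minorant_le.
Qed.

Lemma chain_minorant {x} {A : set (minorant x)} {m0 : minorant x} : A m0 ->
  (forall s t, A s -> A t -> (forall w, s w <= t w)%R \/ (forall w, t w <= s w)%R) ->
  exists m : minorant x, forall t, A t -> forall w, (m w <= t w)%R.
Proof.
move=> Am0 Atot; pose vals w : set R := fun a => exists2 t, A t & a = t w.
have vals_ne w : vals w !=set0 by exists (m0 w), m0.
have vals_lb w : has_lbound (vals w).
  by exists (- norm_at x (- w))%R => _ [t _ ->]; exact: minorant_lb.
have inf_le t w : A t -> (inf (vals w) <= t w)%R.
  by move=> At; apply: ge_inf => //; exists t.
have inf_sub : sublinear (fun w => inf (vals w)).
  split=> [w1 w2|].
    apply: inf_addB => // _ _ [t1 At1 ->] [t2 At2 ->].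
    have [H|H] := Atot _ _ At1 At2.
      apply: le_trans (inf_le t1 _ At1) _; apply: le_trans ((minorant_sub t1).1 w1 w2) _.
      by rewrite lerD2l H.
    apply: le_trans (inf_le t2 _ At2) _; apply: le_trans ((minorant_sub t2).1 w1 w2) _.
    by rewrite lerD2r H.
  apply: hom_of_le => s w s0; apply: inf_scale_ge => // _ [t At ->].
  by rewrite -(minorant_sub t).2 //; exact: inf_le.
exists (Minorant inf_sub (fun w => le_trans (inf_le m0 w Am0) (minorant_le m0 w))).
by move=> t At w; exact: inf_le.
Qed.

Lemma minimal_minorant x : exists m : minorant x,
  forall t : minorant x, (forall w, (t w <= m w)%R) -> forall w, t w = m w.
Proof.
pose below (s t : minorant x) := `[< forall w, (t w <= s w)%R >].
have [||||m Hm] := @Zorn _ below.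
- by move=> t; apply/asboolP => w.
- move=> r s t /asboolP H1 /asboolP H2; apply/asboolP => w; exact: le_trans (H2 w) (H1 w).
- move=> [s sl sle] [t tl tle] /asboolP H1 /asboolP H2.
  have st : s = t by apply/funext => w; apply/le_anti; rewrite H1 H2.
  by subst t; congr Minorant; apply: Prop_irrelevance.
- move=> A Atot; have [[t0 At0]|A0] := pselect (exists t, A t); last first.
    exists (Minorant (lower_sublinear rnorm_sublinear x) (fun w => lexx _)).
    by move=> s As; exfalso; apply: A0; exists s.
  have [m Hm] := chain_minorant At0 (fun s t As At =>
    match Atot s t As At with
    | or_introl H => or_intror (asboolW H) | or_intror H => or_introl (asboolW H) end).
  by exists m => t At; apply/asboolP; exact: Hm.
by exists m => t Ht w; rewrite (Hm t) //; apply/asboolP.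
Qed.

(* A minimal minorant m is additive, since m (- z) = - m z follows from
   minimality applied to the lowering of m in the direction z. *)
Lemma hahn_banach_real x : exists u : X -> R, (forall z w, u (z + w) = u z + u w)%R /\
  (forall r z, u (e r *: z) = r * u z)%R /\ (forall z, (u z <= rnorm z)%R) /\
  u x = rnorm x.
Proof.
have [m Hm] := minimal_minorant x; have m_sub := minorant_sub m.
have mN z : m (- z) = (- m z)%R.
  pose t := Minorant (lower_sublinear m_sub z)
    (fun w => le_trans (lower_le m_sub z w) (minorant_le m w)).
  have /= E := Hm t (lower_le m_sub z) (- z).
  apply/le_anti; rewrite -E (lower_opp m_sub z) /= E.
  by have := sublinear_oppge0 m_sub z; lra.
have mD z w : m (z + w) = (m z + m w)%R.
  apply/le_anti; rewrite m_sub.1 /=.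
  by have := m_sub.1 (- z) (- w); rewrite -opprD !mN; lra.
have m_le z : (m z <= rnorm z)%R.
  exact: le_trans (minorant_le m z) (lower_le rnorm_sublinear x z).
exists m; split=> //; split.
  move=> r z; have [r0|r0|->] := ltgtP r 0%R.
  - rewrite -(opprK r) embN scaleNr mN m_sub.2 ?oppr_gt0 //.
    by rewrite !(mulNr, opprK).
  - exact: m_sub.2.
  - by rewrite emb0 scale0r mul0r sublinear0.
split=> //; apply/le_anti; rewrite m_le /=.
by have := minorant_lb m x; have := lower_opp rnorm_sublinear x; rewrite /norm_at; lra.
Qed.
End HahnBanach.

Lemma unit_rotate {K : numFieldType} (k : K) : exists2 l : K, `|l| = 1 & l * k = `|k|.
Proof.
have [->|k0] := eqVneq k 0; first by exists 1; rewrite ?normr1 ?mulr0 ?normr0.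
exists (`|k| / k); last by rewrite divfK.
by rewrite normrM normrV ?unitfE // normr_id divff // normr_eq0.
Qed.

Lemma ReK_norm_eq {R : realType} {b : bool} (k : scalarK R b) (r : R) :
  `|k| <= emb b r -> ReK b k = r -> k = emb b r.
Proof.
case: b k => /= [[a c]|k] /=; last by move=> _ ->.
rewrite normc_def lecR => /= Hs ar; subst a.
have s0 := sqrtr_ge0 (r ^+ 2 + c ^+ 2).
have sq := sqr_sqrtr (addr_ge0 (sqr_ge0 r) (sqr_ge0 c)).
move: Hs s0 sq; set s := Num.sqrt _ => Hs s0 sq.
suff -> : c = 0 by [].
by apply/eqP; rewrite -sqrf_eq0 eq_le sqr_ge0 andbT; nra.
Qed.

Lemma linear_of_real_part {R : realType} {b : bool} {X : normedModType (scalarK R b)}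
    {u : X -> R} : (forall z w, u (z + w) = u z + u w) ->
    (forall (r : R) z, u (emb b r *: z) = r * u z) ->
  exists f : {linear X -> (scalarK R b)^o}, forall z, ReK b (f z) = u z.
Proof.
move: X u; case: b => X u uD uZ /=; last first.
  have ul : linear (u : X -> (scalarK R false)^o).
    by move=> a z w; rewrite uD; have := uZ a z => /= ->.
  by exists (mklinf ul).
pose f (z : X) : R[i] := ((u z)%:C - 'i * (u ('i *: z))%:C)%C.
have fD z w : f (z + w) = f z + f w by rewrite /f scalerDr !uD !rmorphD /=; ring.
have fR (a : R) z : f ((a%:C)%C *: z) = (a%:C)%C * f z.
  rewrite /f; have -> : 'i *: ((a%:C)%C *: z) = (a%:C)%C *: ('i *: z).
    by rewrite !scalerA mulrC.
  by have := uZ a z; have := uZ a ('i *: z) => /= -> ->; rewrite !rmorphM /=; ring.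
have fI z : f ('i *: z) = 'i * f z.
  have ii : 'i * 'i = -1 :> R[i] by rewrite -expr2 sqr_i.
  rewrite /f scalerA ii scaleN1r; have := uZ (-1) z; rewrite /= rmorphN1 scaleN1r => ->.
  have iiw w : 'i * ('i * w) = - w :> R[i] by rewrite mulrA ii mulN1r.
  by rewrite rmorphM rmorphN1 /= mulrBr iiw; ring.
have fZ (k : R[i]) z : f (k *: z) = k * f z.
  rewrite {1}(complexE k) scalerDl -scalerA fD fR fI fR.
  by rewrite {3}(complexE k) mulrDl mulrA.
have fl : linear (f : X -> (scalarK R true)^o) by move=> a z w; rewrite fD fZ.
by exists (mklinf fl) => z /=; rewrite /f /= mul0r mulr0 !subr0.
Qed.

Lemma norming_functional {R : realType} {b : bool} {X : normedModType (scalarK R b)}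
    (x : X) : exists2 f : {linear X -> (scalarK R b)^o}, nonexpansive f & f x = `|x|.
Proof.
have [u [uD [uZ [u_le ux]]]] := hahn_banach_real x.
have [f Ref] := linear_of_real_part uD uZ.
have f_le z : `|f z| <= `|z|.
  have [l l1 lf] := unit_rotate (f z).
  have flz : f (l *: z) = `|f z| by rewrite linearZ.
  have -> : `|f z| = emb b (u (l *: z)) by rewrite -Ref flz ge0_embRe.
  rewrite normE emb_le; apply: le_trans (u_le _) _.
  by rewrite /rnorm normrZ l1 mul1r.
exists f => //; rewrite normE; apply: ReK_norm_eq; last by rewrite Ref.
by rewrite -normE f_le.
Qed.

Section NormingFunctionals.
Context {K : numFieldType} {X : normedModType K}.
Implicit Types (x y z h : X) (phi : {linear X -> K^o}).

Lemma norming_near {phi x h} : `|x| = 1 -> nonexpansive phi ->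
  phi (x + h) = `|x + h| -> `|1 - phi x| <= `|h| *+ 2.
Proof.
move=> x1 phi1 phixh.
have -> : 1 - phi x = (`|x| - `|x + h|) + phi h.
  by rewrite -phixh linearD /= x1; ring.
apply: le_trans (ler_normD _ _) _; rewrite mulr2n lerD //.
apply: le_trans (ler_dist_dist _ _) _.
by rewrite opprD addrA subrr add0r normrN.
Qed.

Lemma rank1_opnorm {phi x y} : `|x| = 1 -> nonexpansive phi -> y != 0 ->
  phi y = `|y| -> bounded_op (rank1 phi x) /\ is_opnorm (rank1 phi x) 1.
Proof.
move=> x1 phi1 y0 phiy; have Tn z : `|rank1 phi x z| = `|phi z|.
  by rewrite /= normrZ x1 mulr1.
split; first by exists 1 => z; rewrite mul1r Tn.
split; first by move=> a [z [z1 ->]]; rewrite Tn (le_trans (phi1 z)).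
have ny : 0 < `|y| by rewrite normr_gt0.
move=> ep ep0; exists 1; split; last by rewrite ltrBlDr ltrDl.
exists (`|y|^-1 *: y); rewrite normrZ ger0_norm ?invr_ge0 // mulVf ?gt_eqF //.
by rewrite Tn linearZ /= normrM phiy normr_id ger0_norm ?invr_ge0 // mulVf ?gt_eqF.
Qed.

Lemma rotated_functional {F : {linear X -> K^o}} {S : {linear X -> X}} {x}
    {phi : X -> K} {c} : nonexpansive F -> nonexpansive S -> `|x| = 1 ->
  `|F (S x)| = 1 -> (forall z, `|F (S z) - phi z| <= c * `|z|) ->
  exists2 G : {linear X -> K^o}, nonexpansive G &
    G x = 1 /\ forall h, `|h| <= 1 -> `|G h - phi h| <= `|1 - phi x| + c *+ 2.
Proof.
move=> F1 S1 x1 FSx1 FSphi.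
have FS1 z : `|F (S z)| <= `|z| by apply: le_trans (F1 _) (S1 z).
have c0 : 0 <= c by have := FSphi x; rewrite x1 mulr1; exact: le_trans.
have [l l1 lFSx] := unit_rotate (F (S x)); rewrite FSx1 in lFSx.
have Gl : linear (fun z => l * F (S z) : K^o).
  by move=> a z w; rewrite !linearP /= mulrDr mulrCA.
exists (mklinf Gl) => [z|]; first by rewrite /= normrM l1 mul1r.
split=> // h h1; rewrite /=.
have -> : l * F (S h) - phi h = (l - 1) * F (S h) + (F (S h) - phi h) by ring.
apply: le_trans (ler_normD _ _) _; rewrite mulr2n addrA; apply: lerD.
  rewrite normrM -[leRHS]mulr1; apply: ler_pM; rewrite ?normr_ge0 //.
    have -> : l - 1 = l * ((1 - phi x) - (F (S x) - phi x)).
      by rewrite -{1}lFSx; ring.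
    rewrite normrM l1 mul1r; apply: le_trans (ler_normB _ _) _.
    by rewrite lerD2l -[leRHS]mulr1 -x1 FSphi.
  exact: le_trans (FS1 h) h1.
by apply: le_trans (FSphi h) _; rewrite -[leRHS]mulr1 ler_wpM2l.
Qed.
End NormingFunctionals.

Section AlmostMonotoneSlopes.
Local Open Scope classical_set_scope.
Context {R : realType} {b : bool}.
Local Notation K := (scalarK R b).
Local Notation e := (@emb R b).
Local Notation Re := (@ReK R b).
Context {X : normedModType K}.
Implicit Types (x y z h : X) (phi G : {linear X -> K^o}).

Lemma Pi_of_unit {x} : `|x| = 1 -> exists f : {linear X -> K^o}, in_Pi x f.
Proof.
move=> x1; have [f f1 fx] := norming_functional x; exists f.
split=> //; split; first by exists 1 => z; rewrite mul1r.
split; last by rewrite fx x1.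
split; first by move=> a [z [z1 ->]]; exact: le_trans (f1 z) z1.
move=> ep ep0; exists `|f x|; split; first by exists x; rewrite x1.
by rewrite fx x1 normr1 ltrBlDr ltrDl.
Qed.

Definition slope x h (s : R) : R := (rnorm (x + e s *: h) - rnorm x) / s.

Lemma slope_ge_supporting {G x} h {s} : nonexpansive G -> G x = `|x| -> 0 < s ->
  Re (G h) <= slope x h s.
Proof.
move=> G1 Gx s0; rewrite ler_pdivlMr // mulrC.
have := ReK_le_norm (G (x + e s *: h)); move=> /le_trans /(_ (ReK_le (G1 _))).
by rewrite linearD linearZ /= ReKD Gx ReK_embM -!/(rnorm _); lra.
Qed.

Lemma slope_le_norming {phi x h s} : nonexpansive phi ->
  phi (x + e s *: h) = `|x + e s *: h| -> 0 < s -> slope x h s <= Re (phi h).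
Proof.
move=> phi1 phixh s0; rewrite ler_pdivrMr // mulrC.
have := ReK_le_norm (phi x); move=> /le_trans /(_ (ReK_le (phi1 x))).
rewrite /rnorm -phixh linearD linearZ /= ReKD ReK_embM; lra.
Qed.

Lemma slope_lb x h s : 0 < s -> - rnorm h <= slope x h s.
Proof.
move=> s0; rewrite ler_pdivlMr //.
have := rnormD (x + e s *: h) (e (- s) *: h).
by rewrite rnormZ normrN gtr0_norm // embN scaleNr addrK; lra.
Qed.

Lemma small_step_norming {x h phi} {tau : R} : `|x| = 1 -> `|h| <= 1 ->
  0 < tau -> tau < 1 -> nonexpansive phi -> phi (x + e tau *: h) = `|x + e tau *: h| ->
  x + e tau *: h != 0 /\ Re `|1 - phi x| <= 2 * tau.
Proof.
move=> x1 h1 tau0 t1 phi1 phiy.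
have rx : rnorm x = 1 by rewrite /rnorm x1 (ReK1 (b := b)).
have nh1 : rnorm h <= 1 by rewrite -(ReK1 (b := b)); exact: ReK_le h1.
have th : tau * rnorm h <= tau by rewrite -[leRHS]mulr1 ler_wpM2l // ltW.
split.
  rewrite -normr_gt0 normE -emb0 emb_lt.
  have := rnormD (x + e tau *: h) (e (- tau) *: h).
  by rewrite rnormZ normrN gtr0_norm // embN scaleNr addrK rx; lra.
have := ReK_le (norming_near x1 phi1 phiy).
by rewrite mulr2n ReKD -!/(rnorm _) rnormZ gtr0_norm //; lra.
Qed.

Hypothesis numindex1 : @is_numindex _ X 1.
Hypothesis Lpp : @Lpp_nu _ X.

Lemma Lpp_norming_approx {x F} : in_Pi x F -> forall eps : R, 0 < eps ->
  exists2 del : R, 0 < del & forall (tau : R) h phi,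
    0 < tau -> tau < del -> `|h| <= 1 -> nonexpansive phi ->
    phi (x + e tau *: h) = `|x + e tau *: h| ->
    exists2 G : {linear X -> K^o}, nonexpansive G /\ G x = `|x| &
      Re (phi h) - eps <= Re (G h).
Proof.
move=> PF eps eps0; have [x1 [_ [_ Fx1]]] := PF.
have eps4 : 0 < e (eps / 4) by rewrite -emb0 emb_lt divr_gt0.
have [eta [eta0 Heta]] := Lpp _ eps4 _ _ PF.
have [eta' eta'0 etaE] := lt0_emb eta0.
exists (Order.min (Order.min (eta' / 2) (eps / 4)) 1).
  by rewrite !lt_min !divr_gt0 ?ltr01.
move=> tau h phi tau0; rewrite !lt_min => /andP[/andP[t_eta t_eps] t1] h1 phi1 phiy.
have [y0 near1] := small_step_norming x1 h1 tau0 t1 phi1 phiy.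
have [TB T1] := rank1_opnorm x1 phi1 y0 phiy.
have FT z : F (rank1 phi x z) = phi z by rewrite /= linearZ /= Fx1; exact: mulr1.
have phix : 1 - eta < `|F (rank1 phi x x)|.
  rewrite FT etaE -(ge0_embRe (normr_ge0 _)) -emb1 -embB emb_lt.
  have := ReK_le (ler_normD (1 - phi x) (phi x)).
  by rewrite subrK normr1 (ReK1 (b := b)) ReKD; lra.
have [S [SB [S1 [FSx1 [c [Sc c_lt]]]]]] := Heta _ TB (numrad_one numindex1 TB T1) phix.
have FS_phi z : `|F (S z) - phi z| <= c * `|z|.
  rewrite -FT -linearB; apply: le_trans (Pi_nonexpansive PF _) _.
  by apply: (opnorm_le _ Sc) => k w /=; rewrite !linearZZ scalerDr scalerA.
have [G G1 [Gx Gphi]] := rotated_functional (Pi_nonexpansive PF)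
  (numrad1_nonexpansive numindex1 SB S1) x1 FSx1 FS_phi.
exists G; first by rewrite x1.
have c0 : 0 <= c by apply: (is_sup_ge0 Sc) => a [z [_ ->]].
move: c_lt; rewrite -(ge0_embRe c0) emb_lt => c_lt.
have := ReK_le (Gphi h h1); rewrite mulr2n !ReKD.
by have := ReK_le_norm (phi h - G h); rewrite distrC ReKB; lra.
Qed.

Lemma slope_almost_monotone {x F} : in_Pi x F -> forall eps : R, 0 < eps ->
  exists2 del : R, 0 < del & forall (tau s : R) h,
    0 < tau -> tau < del -> `|h| <= 1 -> 0 < s -> slope x h tau - eps <= slope x h s.
Proof.
move=> PF eps eps0; have [del del0 Hdel] := Lpp_norming_approx PF _ eps0.
exists del => // tau s h tau0 tdel h1 s0.
have [phi phi1 phiy] := norming_functional (x + e tau *: h).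
have [G [G1 Gx] HG] := Hdel tau h phi tau0 tdel h1 phi1 phiy.
have := slope_le_norming phi1 phiy tau0; have := slope_ge_supporting h G1 Gx s0; lra.
Qed.

Lemma SSD_at_unit x : `|x| = 1 -> SSD_at x.
Proof.
move=> x1; have [F PF] := Pi_of_unit x1.
pose slopes h : set R := fun a => exists2 s, 0 < s & a = slope x h s.
have slopes_ne h : slopes h !=set0 by exists (slope x h 1), 1.
have slopes_lb h : has_lbound (slopes h).
  by exists (- rnorm h) => _ [s s0 ->]; exact: slope_lb.
exists (fun h => e (inf (slopes h))) => _ /lt0_emb [eps eps0 ->].
have [del del0 Hdel] := slope_almost_monotone PF _ (divr_gt0 eps0 (ltr0Sn R 1)).
exists (e del); split; first by rewrite -emb0 emb_lt.
move=> _ /lt0_emb [tau tau0 ->]; rewrite emb_lt => tdel h h1.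
rewrite (normE (x + _)) (normE x) -embB -embV -embM -embB norm_emb emb_lt.
have up : inf (slopes h) <= slope x h tau by apply: ge_inf; last by exists tau.
have lo : slope x h tau - eps / 2 <= inf (slopes h).
  by apply: lb_le_inf => // _ [s s0 ->]; exact: Hdel.
by rewrite -/(slope x h tau) ger0_norm; lra.
Qed.
End AlmostMonotoneSlopes.

Section Homogeneity.
Context {K : numFieldType} {X : normedModType K}.

Lemma SSD_at_0 : SSD_at (0 : X).
Proof.
exists (fun h => `|h|) => ep ep0; exists 1; split => // t t0 _ h _.
rewrite add0r normr0 subr0 normrZ (gtr0_norm t0) mulrAC mulfV ?gt_eqF //.
by rewrite mul1r subrr normr0.
Qed.

(* Strong subdifferentiability is invariant under positive rescaling: the
   slopes at x / ||x|| with step t / ||x|| are those at x with step t. *)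
Lemma SSD_at_normalize (x : X) : x != 0 -> SSD_at (`|x|^-1 *: x) -> SSD_at x.
Proof.
move=> x0 [D HD]; exists D => ep ep0; have [d [d0 Hd]] := HD ep ep0.
have n0 : 0 < `|x| by rewrite normr_gt0.
exists (d * `|x|); split=> [|t t0 td h h1]; first by rewrite mulr_gt0.
have tx : t / `|x| < d by rewrite ltr_pdivrMr.
have := Hd (t / `|x|) (divr_gt0 t0 n0) tx h h1.
have -> : `|x|^-1 *: x + (t / `|x|) *: h = `|x|^-1 *: (x + t *: h).
  by rewrite scalerDr scalerA mulrC.
rewrite !normrZ ger0_norm ?invr_ge0 //.
suff -> : (`|x|^-1 * `|x + t *: h| - `|x|^-1 * `|x|) / (t / `|x|) =
  (`|x + t *: h| - `|x|) / t by [].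
by field; rewrite !gt_eqF.
Qed.
End Homogeneity.

Theorem proposition3p2 (R : realType) (b : bool)
  (X : completeNormedModType (scalarK R b)) :
  @is_numindex _ X 1 -> @Lpp_nu _ X -> @norm_SSD _ X.
Proof.
move=> numindex1 Lpp x; have [->|x0] := eqVneq x 0; first exact: SSD_at_0.
have x1 : `|(`|x|^-1 *: x)| = 1.
  by rewrite normrZ ger0_norm ?invr_ge0 // mulVf // normr_eq0.
exact: SSD_at_normalize x0 (SSD_at_unit numindex1 Lpp _ x1).
Qed.
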